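(* Let $S$ be the Phillips symmetric operator in $\mathfrak{H}$, let $Q:\mathfrak{N}_i\to\mathfrak{N}_{-i}$ be an arbitrary unitary mapping and let $\Gamma_0,\Gamma_1$ be the associated boundary operators. Then the characteristic function $\Theta(\cdot)$ of $S$ associated with $(\mathfrak{N}_{-i},\Gamma_0,\Gamma_1)$ is identically zero: $\Theta(\mu)=0$ for all $\mu$ with $\operatorname{Im}\mu>0$.
   Context: Phillips symmetric operator: let $U$ be a unitary operator in a Hilbert space $\mathfrak{H}$ which is a bilateral shift with a finite-dimensional wandering subspace $W_0$, i.e. the subspaces $U^nW_0$, $n\in\mathbb{Z}$, are mutually orthogonal and their orthogonal sum is $\mathfrak{H}$. Let $V=U\upharpoonright(\mathfrak{H}\ominus W_0)$ and $S=i(V+I)(V-I)^{-1}$ with $\mathcal{D}(S)=\mathcal{R}(V-I)$; $S$ is a closed densely defined simple symmetric operator with deficiency indices $\langle\dim W_0,\dim W_0\rangle$. Defect subspaces: $\mathfrak{N}_\mu=\mathfrak{H}\ominus\mathcal{R}(S-\mu I)=\ker(S^*-\overline{\mu}I)$; in particular $\mathfrak{N}_{\pm i}$. Every $\psi\in\mathcal{D}(S^* )$ decomposes uniquely as $\psi=u+f_{-i}+f_i$, $u\in\mathcal{D}(S)$, $f_{\pm i}\in\mathfrak{N}_{\pm i}$; for a unitary $Q:\mathfrak{N}_i\to\mathfrak{N}_{-i}$ set $\Gamma_0\psi=f_{-i}+Qf_i$, $\Gamma_1\psi=if_{-i}-iQf_i$. The characteristic function is the operator function on $\mathfrak{N}_{-i}$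 defined for $\operatorname{Im}\mu>0$ by $\Theta(\mu)(\Gamma_1+i\Gamma_0)f=(\Gamma_1-i\Gamma_0)f$ for all $f\in\mathfrak{N}_{\overline{\mu}}$. *)

From mathcomp Require Import all_boot all_algebra.
From mathcomp Require Import reals.
From mathcomp.real_closed Require Export complex.
Set Implicit Arguments.
Unset Strict Implicit.
Unset Printing Implicit Defensive.
Import GRing.Theory Num.Theory.
Local Open Scope ring_scope.
Local Open Scope complex_scope.

Section Hilbert.
Variable R : realType.
Local Notation C := R[i].
Variable H : lmodType C.
(* inner product, linear in the first and conjugate-linear in the second argument *)
Variable ip : H -> H -> C.

Definition is_inner_product : Prop :=
  [/\ (forall (a : C) (x y z : H), ip (a *: x + y) z = a * ip x z + ip y z),
      (forall x y : H, ip y x = (ip x y)^*),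
      (forall x : H, 0 <= ip x x) &
      (forall x : H, ip x x = 0 -> x = 0)].

Definition hnorm (x : H) : C := sqrtC (ip x x).

Definition cauchy_seq (u : nat -> H) : Prop :=
  forall e : C, 0 < e -> exists N : nat,
    forall m n : nat, (N <= m)%N -> (N <= n)%N -> hnorm (u m - u n) < e.

Definition converges_to (u : nat -> H) (l : H) : Prop :=
  forall e : C, 0 < e -> exists N : nat, forall n : nat, (N <= n)%N -> hnorm (u n - l) < e.

Definition complete_space : Prop :=
  forall u : nat -> H, cauchy_seq u -> exists l : H, converges_to u l.

Definition hilbert_space : Prop := is_inner_product /\ complete_space.

Definition orth_compl (A : H -> Prop) (x : H) : Prop := forall y, A y -> ip y x = 0.

Definition subspace (A : H -> Prop) : Prop :=
  A 0 /\ forall (a : C) (x y : H), A x -> A y -> A (a *: x + y).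

Definition finite_dim (A : H -> Prop) : Prop :=
  exists s : seq H, forall x, A x <-> exists c : 'I_(size s) -> C, x = \sum_(k < size s) c k *: s`_k.

Definition unitary (U : H -> H) : Prop :=
  [/\ (forall (a : C) (x y : H), U (a *: x + y) = a *: U x + U y),
      (forall x y : H, ip (U x) (U y) = ip x y) &
      (forall y : H, exists x, U x = y)].

(* U^n W0 for n : int (U is bijective, so U^{-k} W0 = preimage of W0 under U^k) *)
Definition shift_img (U : H -> H) (n : int) (W : H -> Prop) (x : H) : Prop :=
  match n with
  | Posz k => exists w, W w /\ x = iter k U w
  | Negz k => W (iter k.+1 U x)
  end.

Definition wandering (U : H -> H) (W : H -> Prop) : Prop :=
  forall m n : int, m <> n -> forall x y, shift_img U m W x -> shift_img U n W y -> ip x y = 0.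

(* the orthogonal sum of the U^n W is H: finite sums of elements of the U^n W are dense *)
Definition orth_sum_whole (U : H -> H) (W : H -> Prop) : Prop :=
  forall (x : H) (e : C), 0 < e -> exists s : seq (int * H),
    (forall p, p \in s -> shift_img U p.1 W p.2) /\ hnorm (x - \sum_(p <- s) p.2) < e.

Definition bilateral_shift (U : H -> H) (W0 : H -> Prop) : Prop :=
  [/\ unitary U, subspace W0, finite_dim W0, wandering U W0 & orth_sum_whole U W0].

(* Phillips operator: V = U restricted to H (-) W0, S = i (V + I)(V - I)^{-1},
   D(S) = R(V - I).  Its graph: { (Vx - x, i(Vx + x)) | x in H (-) W0 }. *)
Definition domS (U : H -> H) (W0 : H -> Prop) (u : H) : Prop :=
  exists x, orth_compl W0 x /\ u = U x - x.

Definition graphS (U : H -> H) (W0 : H -> Prop) (u v : H) : Prop :=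
  exists x, orth_compl W0 x /\ u = U x - x /\ v = 'i *: (U x + x).

(* defect subspace N_l = H (-) R(S - l I) *)
Definition defect (U : H -> H) (W0 : H -> Prop) (l : C) (f : H) : Prop :=
  forall u v, graphS U W0 u v -> ip (v - l *: u) f = 0.

Definition unitary_between (A B : H -> Prop) (Q : H -> H) : Prop :=
  [/\ (forall f, A f -> B (Q f)),
      (forall g, B g -> exists f, A f /\ Q f = g),
      (forall f g, A f -> A g -> ip (Q f) (Q g) = ip f g) &
      (forall (a : C) f g, A f -> A g -> Q (a *: f + g) = a *: Q f + Q g)].

(* psi = u + f_{-i} + f_i with u in D(S), f_{-i} in N_{-i}, f_i in N_i
   (this decomposition of psi in D(S-star) is unique), and
   g0 = Gamma0 psi = f_{-i} + Q f_i,  g1 = Gamma1 psi = i f_{-i} - i Q f_i *)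
Definition boundary_values (U : H -> H) (W0 : H -> Prop) (Q : H -> H)
    (psi g0 g1 : H) : Prop :=
  exists u fm fp,
    [/\ domS U W0 u, defect U W0 (- 'i) fm, defect U W0 'i fp &
        psi = u + fm + fp] /\
    g0 = fm + Q fp /\ g1 = 'i *: fm - 'i *: Q fp.

(* Theta satisfies the defining relation of the characteristic function at mu:
   Theta (Gamma1 + i Gamma0) f = (Gamma1 - i Gamma0) f for all f in N_{conj mu} *)
Definition char_fun_rel (U : H -> H) (W0 : H -> Prop) (Q : H -> H) (mu : C)
    (Theta : H -> H) : Prop :=
  forall f, defect U W0 mu^* f -> forall g0 g1, boundary_values U W0 Q f g0 g1 ->
    Theta (g1 + 'i *: g0) = g1 - 'i *: g0.

End Hilbert.

(* An element f of the defect space N_(conj mu), Im mu > 0, is orthogonal to every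
   backward shift U^-k w of the wandering subspace: the defect relation gives
   |<U^-k w, f>| = q |<U^-(k+1) w, f>| with q = |conj mu + i| / |conj mu - i| < 1.
   Writing f = (U x - x) + f_(-i) + f_i, this makes <U^-(k+1) w, x> independent of k,
   hence zero since the U^-(k+1) w are orthogonal of equal norm; so f_i is orthogonal
   to W0, and, N_i being orthogonal to all U^n W0 with n <> 0, f_i = 0.  Thus
   (Gamma1 - i Gamma0) f = -2i Q f_i = 0.  Conversely every g in N_(-i) is the
   N_(-i)-component of some f in N_(conj mu): with lam = (mu - i) / (mu + i), the
   contraction y |-> (1 - lam) g + lam U y has a fixed point f, and
   f = U x - x + g for x = lam / (1 - lam) f. *)

From Stdlib Require Import ClassicalEpsilon.
From mathcomp Require Import all_boot all_order all_algebra.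
From mathcomp Require Import ring lra.
From mathcomp Require Import reals.
From mathcomp.real_closed Require Import complex.
Set Implicit Arguments.
Unset Strict Implicit.
Unset Printing Implicit Defensive.
Import Order.TTheory GRing.Theory Num.Theory.
Local Open Scope ring_scope.
Local Open Scope complex_scope.

Section ComplexOrder.
Variable R : realType.
Local Notation C := R[i].

Lemma conjcE (x : C) : Num.conj x = x^*%C.
Proof. by []. Qed.

Lemma addii_neq0 : 'i + 'i != 0 :> C.
Proof. by rewrite -mulr2n mulrn_eq0 /= eq_complex /= oner_eq0 andbF. Qed.

Lemma archiC (y : C) : 0 <= y -> exists n : nat, y < n%:R.
Proof.
case: y => a b; rewrite lecE /= => /andP[/eqP b0 a0].
exists (Num.bound a).
by rewrite -(rmorph_nat (real_complex R)) ltcE /= b0 eqxx archi_boundP.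
Qed.

Lemma infinitesimal_eq0 (x : C) : 0 <= x -> (forall e : C, 0 < e -> x <= e) -> x = 0.
Proof.
move=> x0 small; apply/eqP; apply: contraT => xn0.
have xp : 0 < x by rewrite lt0r xn0.
have := small (x / 2%:R); rewrite divr_gt0 // ler_pdivlMr // => /(_ isT).
by rewrite ger_pMr // lt_geF // ltr1n.
Qed.

Lemma bounded_multiples_eq0 (x K : C) :
  0 <= x -> (forall n : nat, n%:R * x <= K) -> x = 0.
Proof.
move=> x0 bnd; apply/eqP; apply: contraT => xn0.
have xp : 0 < x by rewrite lt0r xn0.
have K0 : 0 <= K by have := bnd 0%N; rewrite mul0r.
have [n ltn] := @archiC (K / x) (divr_ge0 K0 (ltW xp)).
by have := bnd n; rewrite -ler_pdivlMr // lt_geF.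
Qed.

Lemma bernoulli_ineq (p : C) (n : nat) : 0 <= p -> 1 + n%:R * p <= (1 + p) ^+ n.
Proof.
move=> p0; elim: n => [|n IH]; first by rewrite mul0r addr0 expr0.
rewrite exprS; apply: le_trans (_ : (1 + p) * (1 + n%:R * p) <= _); last first.
  by rewrite ler_pM2l // ltr_wpDr // ltr01.
have -> : (1 + p) * (1 + n%:R * p) = 1 + n.+1%:R * p + n%:R * p * p.
  by rewrite -addn1 natrD; ring.
by rewrite lerDl !mulr_ge0 // ler0n.
Qed.

Lemma geometric_small (q K e : C) : 0 <= q -> q < 1 -> 0 <= K -> 0 < e ->
  exists n : nat, q ^+ n * K < e.
Proof.
move=> q0 q1 K0 e0; have [->|qn0] := eqVneq q 0.
  by exists 1%N; rewrite expr1 mul0r.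
have qp : 0 < q by rewrite lt0r qn0.
pose p := q^-1 - 1.
have p0 : 0 < p by rewrite subr_gt0 invf_gt1.
have qE : q = (1 + p)^-1 by rewrite /p addrC subrK invrK.
have [n ltn] := @archiC (K / (e * p)) (divr_ge0 K0 (ltW (mulr_gt0 e0 p0))).
have p1 : 0 < 1 + p by rewrite addr_gt0.
exists n; rewrite qE exprVn mulrC ltr_pdivrMr ?exprn_gt0 //.
apply: lt_le_trans (_ : e * (1 + n%:R * p) <= _); last first.
  by rewrite ler_pM2l // bernoulli_ineq // ltW.
rewrite ltr_pdivrMr ?mulr_gt0 // in ltn.
by rewrite mulrDr mulr1 mulrCA ltr_wpDl // ltW.
Qed.

Lemma norm_conj_addi_lt (mu : C) : 0 < 'Im mu -> `|mu^* + 'i| < `|mu^* - 'i|.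
Proof.
rewrite -complexIm; case: mu => a b; rewrite /= ltcR => b0.
rewrite -(@ltr_pXn2r _ 2) ?nnegrE ?normr_ge0 // -!add_Re2_Im2 ltcR /=.
by rewrite addr0 subr0 ltrD2l !sqrrD; lra.
Qed.

End ComplexOrder.

Section InnerProduct.
Variables (R : realType) (H : lmodType R[i]) (ip : H -> H -> R[i]).
Hypothesis ipP : is_inner_product ip.
Local Notation C := R[i].

Lemma ipDl x y z : ip (x + y) z = ip x z + ip y z.
Proof. by case: ipP => lin _ _ _; have := lin 1 x y z; rewrite scale1r mul1r. Qed.

Lemma ip0l z : ip 0 z = 0.
Proof. by apply: (@addrI _ (ip 0 z)); rewrite -ipDl !addr0. Qed.

Lemma ipZl a x z : ip (a *: x) z = a * ip x z.
Proof. by case: ipP => lin _ _ _; have := lin a x 0 z; rewrite !addr0 ip0l addr0. Qed.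

Lemma ipNl x z : ip (- x) z = - ip x z.
Proof. by rewrite -scaleN1r ipZl mulN1r. Qed.

Lemma ipBl x y z : ip (x - y) z = ip x z - ip y z.
Proof. by rewrite ipDl ipNl. Qed.

Lemma ipC x y : ip y x = (ip x y)^*.
Proof. by case: ipP. Qed.

Lemma ipDr x y z : ip z (x + y) = ip z x + ip z y.
Proof. by rewrite ipC ipDl rmorphD /= -!ipC. Qed.

Lemma ipZr a x z : ip z (a *: x) = a^*%C * ip z x.
Proof. by rewrite ipC ipZl rmorphM /= -ipC. Qed.

Lemma ip0r z : ip z 0 = 0.
Proof. by rewrite ipC ip0l rmorph0 /=. Qed.

Lemma ipNr x z : ip z (- x) = - ip z x.
Proof. by rewrite ipC ipNl rmorphN /= -ipC. Qed.

Lemma ipBr x y z : ip z (x - y) = ip z x - ip z y.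
Proof. by rewrite ipDr ipNr. Qed.

Lemma ip_ge0 x : 0 <= ip x x.
Proof. by case: ipP. Qed.

Lemma ip_eq0 x : ip x x = 0 -> x = 0.
Proof. by case: ipP => _ _ _; apply. Qed.

Lemma ip_CauchySchwarz x y : ip x y * ip y x <= ip x x * ip y y.
Proof.
have [yy0|yyn0] := eqVneq (ip y y) 0.
  by rewrite (ip_eq0 yy0) !ip0l ip0r mul0r mulr0.
have yy_gt0 : 0 < ip y y by rewrite lt0r yyn0 ip_ge0.
have := ip_ge0 (ip y y *: x - ip x y *: y).
rewrite ipBl !ipBr !ipZl !ipZr -!ipC.
have -> : ip y y * (ip y y * ip x x) - ip y y * (ip y x * ip x y) -
    (ip x y * (ip y y * ip y x) - ip x y * (ip y x * ip y y)) =
  ip y y * (ip x x * ip y y - ip x y * ip y x) by ring.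
by rewrite pmulr_rge0 // subr_ge0.
Qed.

Lemma hnorm_ge0 x : 0 <= hnorm ip x.
Proof. by rewrite sqrtC_ge0 ip_ge0. Qed.

Lemma hnorm_sqr x : hnorm ip x ^+ 2 = ip x x.
Proof. exact: sqrtCK. Qed.

Lemma hnorm_eq0 x : hnorm ip x = 0 -> x = 0.
Proof. by move=> x0; apply: ip_eq0; rewrite -hnorm_sqr x0 expr0n. Qed.

Lemma hnorm0 : hnorm ip 0 = 0.
Proof. by rewrite /hnorm ip0l sqrtC0. Qed.

Lemma hnormZ a x : hnorm ip (a *: x) = `|a| * hnorm ip x.
Proof.
by rewrite /hnorm ipZl ipZr mulrA -normCK sqrtCM ?nnegrE ?exprn_ge0 ?ip_ge0 // sqrCK.
Qed.

Lemma hnorm_distC x y : hnorm ip (x - y) = hnorm ip (y - x).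
Proof. by rewrite -opprB -[- _]scaleN1r hnormZ normrN1 mul1r. Qed.

Lemma norm_ip_le x y : `|ip x y| <= hnorm ip x * hnorm ip y.
Proof.
rewrite -(ler_pXn2r (n := 2)) ?nnegrE ?mulr_ge0 ?hnorm_ge0 //.
by rewrite exprMn !hnorm_sqr normCK conjcE -ipC ip_CauchySchwarz.
Qed.

Lemma ler_hnormD x y : hnorm ip (x + y) <= hnorm ip x + hnorm ip y.
Proof.
rewrite -(ler_pXn2r (n := 2)) ?nnegrE ?addr_ge0 ?hnorm_ge0 //.
rewrite sqrrD !hnorm_sqr ipDl !ipDr addrA lerD2r -addrA lerD2l.
have re_cross : ip x y + ip y x \is Num.real.
  by rewrite CrealE conjcE rmorphD /= -!ipC addrC.
rewrite mulr2n; apply: le_trans (real_ler_norm re_cross) _.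
apply: le_trans (ler_normD _ _) _.
by apply: lerD; rewrite ?norm_ip_le // mulrC norm_ip_le.
Qed.

Lemma orthogonal_ip_const_eq0 (e : nat -> H) (x : H) (d : C) :
  (forall i j, i != j -> ip (e i) (e j) = 0) ->
  (forall i, ip (e i) (e i) = ip (e 0%N) (e 0%N)) ->
  (forall i, ip (e i) x = d) -> d = 0.
Proof.
move=> orth_e norm_e ip_e_x; pose s n := \sum_(i < n) e i.
have ipsl n z : ip (s n) z = \sum_(i < n) ip (e i) z.
  exact: (big_morph _ (fun u v => ipDl u v z) (ip0l z)).
have ip_s_s n : ip (s n) (s n) = n%:R * ip (e 0%N) (e 0%N).
  rewrite ipsl mulr_natl -[X in _ *+ X]card_ord -sumr_const; apply: eq_bigr => i _.
  rewrite (big_morph _ (fun u v => ipDr u v (e i)) (ip0r (e i))) (bigD1 i) //=.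
  by rewrite big1 ?addr0 // => j ji; apply: orth_e; rewrite eq_sym.
have ip_s_x n : ip (s n) x = n%:R * d.
  by rewrite ipsl mulr_natl -[X in _ *+ X]card_ord -sumr_const; apply: eq_bigr.
have dd0 : d * d^*%C = 0.
  apply: (@bounded_multiples_eq0 _ _ (ip (e 0%N) (e 0%N) * ip x x)).
    exact: mulcJ_ge0.
  case=> [|n]; first by rewrite mul0r mulr_ge0 ?ip_ge0.
  have := ip_CauchySchwarz (s n.+1) x.
  rewrite (ipC (s n.+1)) ip_s_x ip_s_s rmorphM /= conjc_nat.
  by rewrite mulrACA -!mulrA ler_pM2l ?ltr0Sn.
by move/eqP: dd0; rewrite mulf_eq0 conjc_eq0 orbb => /eqP.
Qed.

Lemma orth_approx_eq0 x :
  (forall e, 0 < e -> exists y, ip y x = 0 /\ hnorm ip (x - y) < e) -> x = 0.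
Proof.
move=> approx; apply: hnorm_eq0; apply: infinitesimal_eq0 (hnorm_ge0 x) _ => e e0.
have [y [yx xy_lt]] := approx e e0.
have [->|xn0] := eqVneq (hnorm ip x) 0; first exact: ltW.
have x_gt0 : 0 < hnorm ip x by rewrite lt0r xn0 hnorm_ge0.
have xxE : ip x x = ip (x - y) x by rewrite ipBl yx subr0.
rewrite -(ler_pM2r x_gt0) -expr2 hnorm_sqr -(ger0_norm (ip_ge0 x)) xxE.
by apply: le_trans (norm_ip_le _ _) _; rewrite ler_pM2r // ltW.
Qed.

Lemma cauchy_seq_geometric (u : nat -> H) (q K : C) : 0 <= q -> q < 1 -> 0 <= K ->
  (forall n, hnorm ip (u n.+1 - u n) <= q ^+ n * K) -> cauchy_seq ip u.
Proof.
move=> q0 q1 K0 step.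
have q1_gt0 : 0 < 1 - q by rewrite subr_gt0.
have telescope n k :
    hnorm ip (u (n + k)%N - u n) * (1 - q) <= (q ^+ n - q ^+ (n + k)) * K.
  elim: k => [|k IH]; first by rewrite addn0 !subrr hnorm0 !mul0r.
  have -> : u (n + k.+1)%N - u n = (u (n + k).+1 - u (n + k)%N) + (u (n + k)%N - u n).
    by rewrite addnS addrA subrK.
  apply: le_trans (ler_wpM2r (ltW q1_gt0) (ler_hnormD _ _)) _.
  rewrite mulrDl; apply: le_trans (lerD (ler_wpM2r (ltW q1_gt0) (step _)) IH) _.
  by rewrite addnS exprS le_eqVlt; apply/orP; left; apply/eqP; ring.
have tail n k : hnorm ip (u (n + k)%N - u n) <= q ^+ n * (K / (1 - q)).
  rewrite mulrA ler_pdivlMr //; apply: le_trans (telescope n k) _.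
  by rewrite ler_wpM2r // gerBl exprn_ge0.
move=> e e0.
have [M qM_lt] := geometric_small q0 q1 (divr_ge0 K0 (ltW q1_gt0)) e0.
have near n k : (M <= n)%N -> hnorm ip (u (n + k)%N - u n) < e.
  move=> Mn; apply: le_lt_trans (tail n k) (le_lt_trans _ qM_lt).
  by rewrite ler_wpM2r ?(divr_ge0 K0 (ltW q1_gt0)) // (ler_wiXn2l q0 (ltW q1)).
exists M => m n Mm Mn; have [nm|mn] := leqP n m.
  by rewrite -(subnKC nm) near.
by rewrite hnorm_distC -(subnKC (ltnW mn)) near.
Qed.

Lemma contraction_fixpoint (T : H -> H) (q : C) : complete_space ip ->
  0 <= q -> q < 1 -> (forall a b, hnorm ip (T a - T b) <= q * hnorm ip (a - b)) ->
  exists f, T f = f.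
Proof.
move=> complete q0 q1 contr; pose u n := iter n T 0.
have step n : hnorm ip (u n.+1 - u n) <= q ^+ n * hnorm ip (u 1%N - u 0%N).
  elim: n => [|n IH]; first by rewrite expr0 mul1r.
  apply: le_trans (contr _ _) _.
  by rewrite exprS -mulrA ler_wpM2l.
have [l ul] := complete u (cauchy_seq_geometric q0 q1 (hnorm_ge0 _) step).
exists l; apply/eqP; rewrite -subr_eq0; apply/eqP/hnorm_eq0.
apply: infinitesimal_eq0 (hnorm_ge0 _) _ => e e0.
have e2 : 0 < e / 2%:R by rewrite divr_gt0 // ltr0Sn.
have [M near_l] := ul _ e2.
have -> : T l - l = (T l - T (u M)) + (u M.+1 - l) by rewrite addrA subrK.
apply: le_trans (ler_hnormD _ _) _; rewrite [e]splitr; apply: lerD; last first.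
  exact/ltW/near_l.
apply: le_trans (contr _ _) _; rewrite hnorm_distC.
apply: le_trans (_ : 1 * hnorm ip (u M - l) <= _).
  by rewrite ler_wpM2r ?hnorm_ge0 // ltW.
by rewrite mul1r ltW // near_l.
Qed.

Lemma unitary_between0 (A B : H -> Prop) Q : A 0 -> unitary_between ip A B Q -> Q 0 = 0.
Proof.
move=> A0 [_ _ _ lin]; have := lin 1 0 0 A0 A0; rewrite addr0 !scale1r => QQ.
by apply: (@addrI _ (Q 0)); rewrite addr0 -QQ.
Qed.

Section Unitary.
Variable U : H -> H.
Hypothesis unitaryU : unitary ip U.

Lemma unitaryDZ a x y : U (a *: x + y) = a *: U x + U y.
Proof. by case: unitaryU. Qed.

Lemma unitary0 : U 0 = 0.
Proof.
have := unitaryDZ 1 0 0; rewrite addr0 !scale1r => UU.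
by apply: (@addrI _ (U 0)); rewrite addr0 -UU.
Qed.

Lemma unitaryZ a x : U (a *: x) = a *: U x.
Proof. by rewrite -[a *: x]addr0 unitaryDZ unitary0 addr0. Qed.

Lemma unitaryB x y : U (x - y) = U x - U y.
Proof. by rewrite addrC -scaleN1r unitaryDZ scaleN1r addrC. Qed.

Lemma unitary_ip x y : ip (U x) (U y) = ip x y.
Proof. by case: unitaryU. Qed.

Lemma hnorm_unitary x : hnorm ip (U x) = hnorm ip x.
Proof. by rewrite /hnorm unitary_ip. Qed.

Definition shift_back (k : nat) (w : H) : H :=
  iter k (fun y => epsilon (inhabits 0) (fun x => U x = y)) w.

Lemma shift_backS k w : U (shift_back k.+1 w) = shift_back k w.
Proof.
case: unitaryU => _ _ surj; rewrite /shift_back iterS.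
exact: (epsilon_spec (inhabits 0) (fun x => U x = shift_back k w) (surj _)).
Qed.

Lemma iter_shift_back k w : iter k U (shift_back k w) = w.
Proof. by elim: k => [//|k IH]; rewrite iterSr shift_backS. Qed.

Lemma ip_shift_back k w : ip (shift_back k w) (shift_back k w) = ip w w.
Proof. by elim: k => [//|k IH]; rewrite -IH -(shift_backS k w) unitary_ip. Qed.

Lemma hnorm_shift_back k w : hnorm ip (shift_back k w) = hnorm ip w.
Proof. by rewrite /hnorm ip_shift_back. Qed.

Section Phillips.
Variable W0 : H -> Prop.
Local Notation defect := (defect ip U W0).
Local Notation orthW := (orth_compl ip W0).

Lemma defectP l f : defect l f <->
  (forall y, orthW y -> ('i - l) * ip (U y) f + ('i + l) * ip y f = 0).
Proof.
split=> [fN y yW | rel u v [y [yW [-> ->]]]].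
  have := fN _ _ (ex_intro _ y (conj yW (conj erefl erefl))).
  by rewrite ipBl !ipZl ipDl ipBl => <-; ring.
by rewrite ipBl !ipZl ipDl ipBl -(rel y yW); ring.
Qed.

Lemma defect_i_orth f y : defect 'i f -> orthW y -> ip y f = 0.
Proof.
move=> /defectP fN /fN; rewrite subrr mul0r add0r => /eqP.
by rewrite mulf_eq0 (negbTE (addii_neq0 R)) => /eqP.
Qed.

Lemma defect_Ni_orth f y : defect (- 'i) f -> orthW y -> ip (U y) f = 0.
Proof.
move=> /defectP fN /fN; rewrite opprK subrr mul0r addr0 => /eqP.
by rewrite mulf_eq0 (negbTE (addii_neq0 R)) => /eqP.
Qed.

Lemma defectZ l a f : defect l f -> defect l (a *: f).
Proof. by move=> fN u v uv; rewrite ipZr fN // mulr0. Qed.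

Lemma defect0 l : defect l 0.
Proof. by move=> u v _; rewrite ip0r. Qed.

Hypothesis wanderingW : wandering ip U W0.

Lemma shift_img_orth n v : n != 0 -> shift_img U n W0 v -> orthW v.
Proof.
move=> n0 vn y yW; apply: (wanderingW (m := 0) (n := n)) => //.
  by move=> n0E; rewrite -n0E eqxx in n0.
by exists y.
Qed.

Lemma shift_img_back k w : W0 w -> shift_img U (Negz k) W0 (shift_back k.+1 w).
Proof.
by move=> wW; change (W0 (iter k.+1 U (shift_back k.+1 w))); rewrite iter_shift_back.
Qed.

Lemma shift_back_orth k w : W0 w -> orthW (shift_back k.+1 w).
Proof. by move=> wW; apply: (@shift_img_orth (Negz k)) => //; apply: shift_img_back. Qed.

Lemma shift_back_orthogonal j k w : W0 w -> j != k ->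
  ip (shift_back j.+1 w) (shift_back k.+1 w) = 0.
Proof.
move=> wW jk; apply: (wanderingW (m := Negz j) (n := Negz k)).
- by case=> /eqP; rewrite (negbTE jk).
- exact: shift_img_back.
- exact: shift_img_back.
Qed.

Lemma defect_orth_shift_back mu f w k : 0 < 'Im mu -> defect mu^*%C f -> W0 w ->
  ip (shift_back k w) f = 0.
Proof.
move=> mu_gt0 fN wW; pose c j := ip (shift_back j w) f.
set a := 'i - mu^*%C; set b := 'i + mu^*%C.
have ba : `|b| < `|a|.
  by rewrite /a /b addrC -(opprB mu^*%C) normrN norm_conj_addi_lt.
have a_gt0 : 0 < `|a| := le_lt_trans (normr_ge0 b) ba.
pose q := `|b| / `|a|.
have q0 : 0 <= q by rewrite divr_ge0.
have q1 : q < 1 by rewrite ltr_pdivrMr // mul1r.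
have c_rec j : `|c j| = q * `|c j.+1|.
  have /eqP := (defectP _ _).1 fN _ (shift_back_orth j wW).
  rewrite shift_backS addr_eq0 => /eqP/(congr1 Num.norm); rewrite normrN !normrM.
  by rewrite /q mulrAC => <-; rewrite mulrAC divff ?mul1r // gt_eqF.
have c_bound n j : `|c j| <= q ^+ n * (hnorm ip w * hnorm ip f).
  elim: n j => [|n IH] j.
    by rewrite expr0 mul1r -(hnorm_shift_back j w) norm_ip_le.
  by rewrite c_rec exprS -mulrA; apply: ler_wpM2l.
apply/eqP; rewrite -normr_eq0; apply/eqP/infinitesimal_eq0 => // e e0.
have [n lt_e] := geometric_small q0 q1 (mulr_ge0 (hnorm_ge0 w) (hnorm_ge0 f)) e0.
exact: le_trans (c_bound n k) (ltW lt_e).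
Qed.

Lemma defect_decomp_i_orth mu x fm fp w : 0 < 'Im mu -> orthW x ->
  defect (- 'i) fm -> defect 'i fp -> defect mu^*%C (U x - x + fm + fp) ->
  W0 w -> ip w fp = 0.
Proof.
move=> mu_gt0 xW fmN fpN fN wW; pose f := U x - x + fm + fp.
pose d j := ip (shift_back j.+1 w) x.
have ip_f j : ip (shift_back j w) f = d j - ip (shift_back j w) x + ip (shift_back j w) fp.
  have ip_Ux : ip (shift_back j w) (U x) = d j by rewrite -(shift_backS j w) unitary_ip.
  have ip_fm : ip (shift_back j w) fm = 0.
    by rewrite -(shift_backS j w) (defect_Ni_orth fmN (shift_back_orth j wW)).
  by rewrite /f !ipDr ipNr ip_Ux ip_fm addr0.
have d_const j : d j = d 0%N.
  elim: j => [//|j <-]; apply/eqP; rewrite -subr_eq0.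
  have := ip_f j.+1; rewrite (defect_orth_shift_back _ mu_gt0 fN wW).
  by rewrite (defect_i_orth fpN (shift_back_orth j wW)) addr0 => <-.
have d0 : d 0%N = 0.
  apply: (@orthogonal_ip_const_eq0 (fun j => shift_back j.+1 w) x).
  - by move=> i j; apply: shift_back_orthogonal.
  - by move=> j; rewrite !ip_shift_back.
  - exact: d_const.
have := ip_f 0%N; rewrite (defect_orth_shift_back _ mu_gt0 fN wW) d0 /=.
by rewrite (xW w wW) subrr add0r.
Qed.

Hypothesis W0_total : orth_sum_whole ip U W0.

Lemma defect_i_orth_wandering_eq0 fp : defect 'i fp -> (forall w, W0 w -> ip w fp = 0) ->
  fp = 0.
Proof.
move=> fpN fpW; apply: orth_approx_eq0 => e e0.
have [s [sW approx]] := W0_total fp e0; exists (\sum_(p <- s) p.2); split=> //.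
rewrite (big_morph _ (fun u v => ipDl u v fp) (ip0l fp)) big1_seq // => -[n v] /andP[_ /sW] /=.
have [-> [w [wW ->]]|n0 vn] := eqVneq n 0; first exact: fpW.
exact: defect_i_orth fpN (shift_img_orth n0 vn).
Qed.

Lemma defect_decomp_i_eq0 mu x fm fp : 0 < 'Im mu -> orthW x ->
  defect (- 'i) fm -> defect 'i fp -> defect mu^*%C (U x - x + fm + fp) -> fp = 0.
Proof.
move=> mu_gt0 xW fmN fpN fN; apply: defect_i_orth_wandering_eq0 => // w.
exact: defect_decomp_i_orth mu_gt0 xW fmN fpN fN.
Qed.

Lemma defect_conj_onto_Ni mu fm : complete_space ip -> 0 < 'Im mu ->
  defect (- 'i) fm -> exists2 x, orthW x & defect mu^*%C (U x - x + fm).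
Proof.
move=> complete mu_gt0 fmN.
have lt_mu := norm_conj_addi_lt mu_gt0.
have mu_i_neq0 : mu^*%C - 'i != 0.
  by rewrite -normr_gt0; apply: le_lt_trans (normr_ge0 _) lt_mu.
(* [lam = (mu - i) / (mu + i)], written so that its conjugate is explicit *)
pose lam := ((mu^*%C + 'i) / (mu^*%C - 'i))^*%C.
have lam_lt1 : `|lam| < 1.
  by rewrite normcJ normrM normfV ltr_pdivrMr ?normr_gt0 // mul1r.
have lam1 : 1 - lam != 0.
  by rewrite subr_eq0; apply: contraTneq lam_lt1 => <-; rewrite normr1 ltxx.
pose T y := (1 - lam) *: fm + lam *: U y.
have [f Tf] : exists f, T f = f.
  apply: (contraction_fixpoint complete (normr_ge0 lam) lam_lt1) => a b.
  by rewrite /T opprD addrACA subrr add0r -scalerBr -unitaryB hnormZ hnorm_unitary.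
have fN : defect mu^*%C f.
  apply/defectP => y yW.
  have -> : ip (U y) f = lam^*%C * ip y f.
    by rewrite -{1}Tf /T ipDr !ipZr unitary_ip (defect_Ni_orth fmN yW) mulr0 add0r.
  rewrite mulrA -mulrDl /lam conjcK.
  have -> : ('i - mu^*%C) * ((mu^*%C + 'i) / (mu^*%C - 'i)) + ('i + mu^*%C) = 0.
    by field.
  by rewrite mul0r.
exists ((lam / (1 - lam)) *: f).
  by move=> w wW; rewrite ipZr (defect_orth_shift_back 0 mu_gt0 fN wW) mulr0.
have lamUf : lam *: U f = f - (1 - lam) *: fm.
  by rewrite -[in RHS]Tf /T addrAC subrr add0r.
have -> : lam / (1 - lam) = (1 - lam)^-1 * lam by rewrite mulrC.
suff -> : U (((1 - lam)^-1 * lam) *: f) - ((1 - lam)^-1 * lam) *: f + fm = f by [].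
rewrite unitaryZ -!scalerA lamUf scalerBr [_ *: (_ *: fm)]scalerA mulVf // scale1r.
rewrite addrAC subrK -scalerBr -{1}[f]scale1r -scalerBl scalerA mulVf //.
by rewrite scale1r.
Qed.

End Phillips.
End Unitary.
End InnerProduct.

Theorem lemma3p1 (R : realType) (H : lmodType R[i]) (ip : H -> H -> R[i])
    (U : H -> H) (W0 : H -> Prop) (Q : H -> H) :
  hilbert_space ip ->
  bilateral_shift ip U W0 ->
  unitary_between ip (defect ip U W0 'i) (defect ip U W0 (- 'i)) Q ->
  forall mu : R[i], 0 < 'Im mu ->
    (forall f, defect ip U W0 mu^* f ->
       forall g0 g1, boundary_values ip U W0 Q f g0 g1 -> g1 - 'i *: g0 = 0)
    /\ (forall Theta : H -> H, char_fun_rel ip U W0 Q mu Theta ->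
          forall g, defect ip U W0 (- 'i) g -> Theta g = 0).
Proof.
move=> [ipP complete] [unitaryU _ _ wanderingW W0_total] Qunitary mu mu_gt0.
have Q0 : Q 0 = 0 := unitary_between0 (defect0 ipP 'i) Qunitary.
split=> [f fN g0 g1 | Theta Theta_rel g gN].
  move=> [u [fm [fp [[[x [xW ->]] fmN fpN fE] [-> ->]]]]]; rewrite fE in fN.
  have -> := defect_decomp_i_eq0 ipP unitaryU wanderingW W0_total mu_gt0 xW fmN fpN fN.
  by rewrite Q0 addr0 scaler0 subr0 subrr.
pose fm := ('i + 'i)^-1 *: g.
have [x xW fN] := defect_conj_onto_Ni ipP unitaryU wanderingW complete mu_gt0
  (defectZ ipP ('i + 'i)^-1 gN).
have bv : boundary_values ip U W0 Q (U x - x + fm) fm ('i *: fm).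
  exists (U x - x), fm, 0; split; last by rewrite Q0 addr0 scaler0 subr0.
  by split; [exists x | exact: defectZ | exact: defect0 | rewrite addr0].
have := Theta_rel _ fN _ _ bv; rewrite subrr -scalerDl /fm scalerA mulfV ?scale1r //.
exact: addii_neq0.
Qed.
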